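(* Let $X$ be a connected weighted non-bipartite graph with vertex $u$. If $0\notin\Phi_{\mathbf e_u}(X)$, then the two copies $(0,u)$ and $(1,u)$ of $u$ in $K_2\times X$ are not sedentary. Additionally, if $A(X)$ is nonsingular, then no vertex of $K_2\times X$ is sedentary.
   Context: Graphs are simple, connected, undirected, with nonzero real edge weights; $A(X)$ is the weighted adjacency matrix, $E_\lambda$ the orthogonal projection onto its $\lambda$-eigenspace, and $\Phi_{\mathbf e_u}(X)=\{\lambda:E_\lambda\mathbf e_u\ne0\}$. The bipartite double $K_2\times X$ has vertex set $\{0,1\}\times V(X)$ and adjacency matrix $A(K_2)\otimes A(X)$. With $U(t)=e^{itA}$, a vertex $u$ is not sedentary if $\inf_{t>0}|U(t)_{u,u}|=0$ and sedentary if this infimum is positive. *)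

From HB Require Import structures.
From mathcomp Require Import all_boot all_order all_algebra.
From mathcomp Require Import all_classical all_reals all_analysis.
Set Implicit Arguments. Unset Strict Implicit. Unset Printing Implicit Defensive.
Import Order.TTheory GRing.Theory Num.Theory.
Local Open Scope ring_scope.
Local Open Scope classical_set_scope.

Section Defs.
Variable R : realType.

Definition weighted_graph n (A : 'M[R]_n) : Prop :=
  A^T = A /\ (forall i, A i i = 0).

Definition adj n (A : 'M[R]_n) : rel 'I_n := fun i j => A i j != 0.

Definition graph_connected n (A : 'M[R]_n) : Prop :=
  forall i j, connect (adj A) i j.

Definition bipartite n (A : 'M[R]_n) : Prop :=
  exists f : 'I_n -> bool, forall i j, adj A i j -> f i != f j.

Definition evec n (u : 'I_n) : 'cV[R]_n := delta_mx u 0.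

(* E is the orthogonal projection onto the lambda-eigenspace of A:
   symmetric idempotent matrix whose (row = column) space is the eigenspace *)
Definition eig_proj n (A : 'M[R]_n) (lam : R) (E : 'M[R]_n) : Prop :=
  E *m E = E /\ E^T = E /\ (E == eigenspace A lam)%MS.

Definition Phi n (A : 'M[R]_n) (u : 'I_n) : set R :=
  [set lam | exists E, eig_proj A lam E /\ E *m evec u != 0].

(* --- bipartite double K_2 x X: adjacency A(K_2) (x) A(X) = [[0,A],[A,0]],
   vertex (0,u) is lshift n u and (1,u) is rshift n u --- *)
Definition double_adj n (A : 'M[R]_n) : 'M[R]_(n + n) := block_mx 0 A A 0.
Definition copy0 n (u : 'I_n) : 'I_(n + n) := lshift n u.
Definition copy1 n (u : 'I_n) : 'I_(n + n) := rshift n u.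

(* --- transition matrix U(t) = exp(itA) = cos(tA) + i sin(tA),
   each part given by its defining (entrywise convergent) power series --- *)
Definition mxpow m (M : 'M[R]_m) (k : nat) : 'M[R]_m := iter k (mulmx M) 1%:M.

Definition cos_mx m (M : 'M[R]_m) (t : R) : 'M[R]_m :=
  \matrix_(i, j) limn (fun N : nat =>
     (\sum_(k < N) (((-1) ^+ k * t ^+ (2 * k) / ((2 * k)`!)%:R) *: mxpow M (2 * k))) i j).

Definition sin_mx m (M : 'M[R]_m) (t : R) : 'M[R]_m :=
  \matrix_(i, j) limn (fun N : nat =>
     (\sum_(k < N) (((-1) ^+ k * t ^+ (2 * k).+1 / ((2 * k).+1`!)%:R)
                      *: mxpow M (2 * k).+1)) i j).

(* |U(t)_{u,u}| : modulus of the complex number cos(tA)_{uu} + i sin(tA)_{uu} *)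
Definition absU m (M : 'M[R]_m) (t : R) (u : 'I_m) : R :=
  Num.sqrt (cos_mx M t u u ^+ 2 + sin_mx M t u u ^+ 2).

Definition sedentary m (M : 'M[R]_m) (u : 'I_m) : Prop :=
  0 < inf [set absU M t u | t in [set t : R | 0 < t]].

Definition not_sedentary m (M : 'M[R]_m) (u : 'I_m) : Prop :=
  inf [set absU M t u | t in [set t : R | 0 < t]] = 0.

End Defs.

(* At a copy v of u in K_2 x X, the odd powers of A(K_2 x X) vanish on the
   diagonal and the even ones agree with those of A(X) at u.  Writing the
   spectral decomposition at u as (A^k)_uu = sum_j w_j l_j^k, this gives
   U(t)_vv = sum_j w_j cos (l_j t).  When 0 is not in Phi_{e_u} (in particular
   when A is nonsingular), l_j <> 0 whenever w_j <> 0, so U(t)_vv is the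
   derivative of the bounded function sum_j (w_j / l_j) sin (l_j t); by the mean
   value theorem on [0, T] it takes values of size O(1/T), hence
   inf_{t>0} |U(t)_vv| = 0. *)

From HB Require Import structures.
From mathcomp Require Import all_boot all_order all_algebra.
From mathcomp Require Import all_classical all_reals all_analysis.
From mathcomp Require Import ring lra.
Import Order.TTheory GRing.Theory Num.Theory numFieldNormedType.Exports.
From mathcomp Require Import complex spectral.
Set Implicit Arguments. Unset Strict Implicit. Unset Printing Implicit Defensive.
Local Open Scope ring_scope.
Local Open Scope classical_set_scope.

Section CosineSums.
Variable R : realType.

Lemma derive_of_bounded_small (f g : R -> R) (M : R) :
  (forall x : R, is_derive x 1 g (f x)) -> (forall t, `|g t| <= M) ->
  forall e, 0 < e -> exists2 t, 0 < t & `|f t| < e.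
Proof.
move=> dg gM e e0.
have M0 : 0 <= M := le_trans (normr_ge0 _) (gM 0).
set T := (M *+ 2 + 1) / e.
have T0 : 0 < T by rewrite divr_gt0 // ltr_wpDl // mulrn_wge0.
have gc : {within `[0, T], continuous g}.
  apply: continuous_subspaceT => x; have [dgx _] := dg x.
  exact/differentiable_continuous/derivable1_diffP.
have [c cT gTc] := MVT T0 (fun x _ => dg x) gc.
exists c; first by move: cT; rewrite in_itv => /andP[].
have fcT : `|f c| * T <= M *+ 2.
  rewrite -(gtr0_norm T0) -normrM -(subr0 T) -gTc.
  by apply: le_trans (ler_normB _ _) _; rewrite mulr2n lerD.
rewrite ltNge; apply/negP => efc.
have : e * T <= `|f c| * T by rewrite ler_wpM2r // ltW.
rewrite mulrC divfK ?gt_eqF //; lra.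
Qed.

Lemma is_derive_sinZ (c l x : R) :
  is_derive x 1 (fun t => c * sin (l * t)) (c * (cos (l * x) * l)).
Proof.
have dl : is_derive x 1 (fun t : R => l * t) l.
  by have := is_deriveZ l (is_derive_id x 1); rewrite /GRing.scale /= mulr1.
exact: (@is_deriveZ R R R _ c x 1 _ (is_derive1_comp (is_derive_sin (l * x)) dl)).
Qed.

Lemma cos_sum_small m (w l : 'I_m -> R) : (forall j, w j != 0 -> l j != 0) ->
  forall e, 0 < e -> exists2 t, 0 < t & `|\sum_j w j * cos (l j * t)| < e.
Proof.
move=> wl; pose g := \sum_j (fun t => w j / l j * sin (l j * t)).
apply: (@derive_of_bounded_small _ g (\sum_j `|w j / l j|)).
- move=> x; have -> : \sum_j w j * cos (l j * x) =
                      \sum_j w j / l j * (cos (l j * x) * l j).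
    apply: eq_bigr => j _; have [->|/wl lj] := eqVneq (w j) 0; first by rewrite !mul0r.
    by rewrite mulrCA divfK // mulrC.
  exact: is_derive_sum (fun j => is_derive_sinZ _ _ x).
- move=> t; rewrite /g fct_sumE; apply: le_trans (ler_norm_sum _ _ _) _.
  apply: ler_sum => j _; rewrite normrM.
  by rewrite -[leRHS]mulr1 ler_wpM2l // sin_max.
Qed.

Lemma inf_pos_image_eq0 (h : R -> R) : (forall t, 0 <= h t) ->
  (forall e, 0 < e -> exists2 t, 0 < t & h t < e) ->
  inf [set h t | t in [set t | 0 < t]] = 0.
Proof.
move=> h0 hsmall; set S := [set h t | t in _].
have S0 : lbound S 0 by move=> _ [t _ <-]; exact: h0.
have S_neq0 : nonempty S by exists (h 1), 1 => //=; exact: ltr01.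
apply/eqP; rewrite eq_le lb_le_inf // andbT leNgt; apply/negP => /hsmall[t t0 hte].
by have := ge_inf (ex_intro _ 0 S0) (ex_intro2 _ _ t t0 erefl); rewrite leNgt hte.
Qed.

End CosineSums.

Section MatrixSeries.
Variable R : realType.

Lemma cos_mx_entry m (M : 'M[R]_m) v p (w l : 'I_p -> R) t :
  (forall k, mxpow M (2 * k) v v = \sum_j w j * l j ^+ (2 * k)) ->
  cos_mx M t v v = \sum_j w j * cos (l j * t).
Proof.
move=> Mw; rewrite /cos_mx mxE; apply: cvg_lim => //.
have -> : (fun N => (\sum_(k < N) ((-1) ^+ k * t ^+ (2 * k) / ((2 * k)`!)%:R)
                       *: mxpow M (2 * k)) v v) =
          (fun N => \sum_j w j * series (cos_coeff' (l j * t)) N).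
  apply/funext => N; rewrite summxE /series /=.
  under eq_bigr do rewrite mxE Mw mulr_sumr.
  rewrite exchange_big /=; apply: eq_bigr => j _.
  rewrite big_mkord mulr_sumr; apply: eq_bigr => k _.
  by rewrite /cos_coeff' -mul2n exprMn -exprnP; ring.
apply: (@cvg_big _ _ +%R 0 xpredT add_continuous) => // j _.
by apply: cvgMl_tmp; exact: cvg_cos_coeff'.
Qed.

Lemma sin_mx_entry_eq0 m (M : 'M[R]_m) v t :
  (forall k, mxpow M (2 * k).+1 v v = 0) -> sin_mx M t v v = 0.
Proof.
move=> Mv; rewrite /sin_mx mxE.
under eq_fun do rewrite summxE.
under eq_fun do under eq_bigr do rewrite mxE Mv mulr0.
under eq_fun do rewrite big1 //.
exact: lim_cst.
Qed.

Lemma mxpow_double_adj n (A : 'M[R]_n) k : mxpow (double_adj A) k =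
  if odd k then block_mx 0 (mxpow A k) (mxpow A k) 0
  else block_mx (mxpow A k) 0 0 (mxpow A k).
Proof.
elim: k => [|k IH]; first by rewrite /mxpow /= -scalar_mx_block.
rewrite [LHS]/mxpow /= -/(mxpow _ k) IH /double_adj.
by case: (odd k); rewrite /= mulmx_block !mul0mx !mulmx0 ?add0r ?addr0.
Qed.

Lemma mxpow_double_adj_copy n (A : 'M[R]_n) u k v :
  v = copy0 u \/ v = copy1 u ->
  mxpow (double_adj A) k v v = if odd k then 0 else mxpow A k u u.
Proof.
by move=> [->|->]; rewrite mxpow_double_adj;
  case: (odd k); rewrite ?block_mxEul ?block_mxEdr ?mxE.
Qed.

Lemma absU_double_adj_copy n (A : 'M[R]_n) u v p (w l : 'I_p -> R) t :
  (forall k, mxpow A k u u = \sum_j w j * l j ^+ k) ->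
  v = copy0 u \/ v = copy1 u ->
  absU (double_adj A) t v = `|\sum_j w j * cos (l j * t)|.
Proof.
move=> Aw uv; rewrite /absU sin_mx_entry_eq0 => [|k]; last first.
  by rewrite (mxpow_double_adj_copy A _ uv) mul2n /= odd_double.
rewrite (cos_mx_entry _ _ (w := w) (l := l)) => [|k].
  by rewrite expr0n addr0 sqrtr_sqr.
by rewrite (mxpow_double_adj_copy A _ uv) mul2n odd_double -mul2n Aw.
Qed.

End MatrixSeries.

Section OrthogonalProjection.
Variable R : realType.

Lemma mulmx_trmx_eq0 m p (M : 'M[R]_(m, p)) : M *m M^T = 0 -> M = 0.
Proof.
move=> /matrixP MMT; apply/matrixP => i j; rewrite mxE.
have /eqP := MMT i i; rewrite !mxE.
under eq_bigr do rewrite mxE -expr2.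
rewrite psumr_eq0 => [/allP/(_ j (mem_index_enum _))|k _]; last exact: sqr_ge0.
by rewrite sqrf_eq0 => /eqP.
Qed.

Lemma orthogonal_projection_exists n (K : 'M[R]_n) :
  exists E : 'M[R]_n, [/\ E *m E = E, E^T = E & (E == K)%MS].
Proof.
have BK : (row_base K :=: K)%MS := eq_row_base K.
have Bfree := row_base_free K.
move: (row_base K) BK Bfree => B BK Bfree.
set G := B *m B^T.
have Gu : G \in unitmx.
  rewrite -row_free_unit -kermx_eq0; apply/eqP.
  have XG : kermx G *m G = 0 := mulmx_ker G.
  have XB : kermx G *m B = 0.
    by apply: mulmx_trmx_eq0; rewrite trmx_mul mulmxA -(mulmxA _ B) XG mul0mx.
  by apply/eqP; rewrite -(mulmx_free_eq0 _ Bfree) XB.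
have BE : B *m (B^T *m invmx G *m B) = B by rewrite !mulmxA mulmxV // mul1mx.
exists (B^T *m invmx G *m B); split.
- by rewrite -[LHS]mulmxA BE.
- by rewrite !trmx_mul trmxK trmx_inv trmx_mul trmxK mulmxA.
- apply/andP; split; rewrite -BK; first exact: submxMl.
  by rewrite -[X in (X <= _)%MS]BE submxMl.
Qed.

Lemma notin_Phi_eigenvector n (A : 'M[R]_n) u lam : ~ Phi A u lam ->
  forall x : 'rV[R]_n, x *m A = lam *: x -> x 0 u = 0.
Proof.
move=> uPhi x xA; have [E [EE ET EK]] := orthogonal_projection_exists (eigenspace A lam).
have Eu : E *m evec R u = 0.
  by apply/eqP; apply: contrapT => /negP Eu; apply: uPhi; exists E.
have xK : (x <= eigenspace A lam)%MS.
  by apply/sub_kermxP; rewrite mulmxBr xA mul_mx_scalar subrr.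
have xE : (x <= E)%MS by rewrite (eqmxP EK).
have -> : x 0 u = (x *m evec R u) 0 0 by rewrite /evec -colE mxE.
have [y ->] := submxP xE.
by rewrite -mulmxA Eu mulmx0 mxE.
Qed.

End OrthogonalProjection.

Section SpectralWeights.
Variable R : realType.
Local Notation C := R[i].
Local Notation rc := (real_complex R).

Lemma map_mxpow n (A : 'M[R]_n) k : map_mx rc (mxpow A k) = map_mx rc A ^+ k.
Proof.
elim: k => [|k IH]; first by rewrite /mxpow /= map_mx1.
by rewrite /mxpow /= -/(mxpow A k) map_mxM IH exprS mulmxE.
Qed.

Lemma mxpow_unitary_conj n (P : 'M[C]_n) (d : 'rV[C]_n) k : P \is unitarymx ->
  ((P ^t* )%sesqui *m diag_mx d *m P) ^+ k =
  (P ^t* )%sesqui *m diag_mx (\row_j d 0 j ^+ k) *m P.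
Proof.
move=> /unitarymxP PPt; have PtP := mulmx1C PPt.
elim: k => [|k IH].
  have -> : diag_mx (\row_j d 0 j ^+ 0) = 1%:M.
    by apply/matrixP => i j; rewrite !mxE expr0.
  by rewrite mulmx1 PtP expr0.
rewrite exprS -mulmxE IH !mulmxA -(mulmxA _ P) PPt mulmx1.
rewrite -(mulmxA _ (diag_mx d)) mulmx_diag.
by congr (_ *m diag_mx _ *m _); apply/rowP => j; rewrite !mxE exprS.
Qed.

Lemma symmetric_spectral_decomposition n (A : 'M[R]_n) : A^T = A ->
  exists2 P : 'M[C]_n, P \is unitarymx & exists l : 'I_n -> R,
    map_mx rc A = (P ^t* )%sesqui *m diag_mx (\row_j rc (l j)) *m P.
Proof.
move=> AT; set Ac := map_mx rc A.
have Aherm : Ac \is hermsymmx.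
  apply/is_hermitianmxP; rewrite expr0 scale1r; apply/matrixP => i j.
  by rewrite !mxE -[in RHS]AT mxE /Num.conj /=; simpc.
have Pu := spectral_unitarymx Ac.
exists (spectralmx Ac) => //; exists (fun j => Re (spectral_diag Ac 0 j)).
rewrite {1}(orthomx_spectralP (hermitian_normalmx Aherm)) invmx_unitary //.
congr (_ *m diag_mx _ *m _); apply/rowP => j; rewrite mxE.
have /matrixP /(_ 0 j) := realmxC (hermitian_spectral_diag_real Aherm).
rewrite mxE; case: (spectral_diag Ac 0 j) => a b /= [] /eqP.
by rewrite eq_sym -subr_eq0 opprK -mulr2n mulrn_eq0 /= => /eqP ->.
Qed.

Lemma conjC_mul_self (z : C) : z^* * z = rc (Re z ^+ 2 + Im z ^+ 2).
Proof.
case: z => a b; rewrite /Num.conj /=; simpc.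
by apply/eqP; rewrite eq_complex /= !expr2 eqxx /=; apply/eqP; ring.
Qed.

Lemma real_kernel_Re_Im n (A : 'M[R]_n) (p : 'rV[C]_n) : p *m map_mx rc A = 0 ->
  map_mx (@Re R) p *m A = 0 /\ map_mx (@Im R) p *m A = 0.
Proof.
move=> /rowP pA; split; apply/rowP => l; have := pA l; rewrite !mxE.
- move=> /(congr1 (@Re R)); rewrite (raddf_sum (@Re R : Rcomplex R -> R)).
  move=> sumRe; apply: etrans sumRe; apply: eq_bigr => i _; rewrite !mxE.
  by case: (p 0 i) => a b /=; rewrite mulr0 subr0.
- move=> /(congr1 (@Im R)); rewrite (raddf_sum (@Im R : Rcomplex R -> R)).
  move=> sumRe; apply: etrans sumRe; apply: eq_bigr => i _; rewrite !mxE.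
  by case: (p 0 i) => a b /=; rewrite mulr0 add0r.
Qed.

Lemma symmetric_spectral_weights n (A : 'M[R]_n) u : A^T = A ->
  (forall x : 'rV[R]_n, x *m A = 0 -> x 0 u = 0) ->
  exists w l : 'I_n -> R, (forall k, mxpow A k u u = \sum_j w j * l j ^+ k) /\
                          (forall j, w j != 0 -> l j != 0).
Proof.
move=> AT Aker; have [P Pu [l Adiag]] := symmetric_spectral_decomposition AT.
exists (fun j => Re (P j u) ^+ 2 + Im (P j u) ^+ 2), l; split.
- move=> k; apply: complexI.
  have -> : rc (mxpow A k u u) = map_mx rc (mxpow A k) u u by rewrite mxE.
  rewrite map_mxpow Adiag.
  rewrite mxpow_unitary_conj // mul_mx_diag !mxE rmorph_sum; apply: eq_bigr => j _.
  by rewrite !mxE rmorphM rmorphXn mulrAC conjC_mul_self.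
- move=> j; apply: contraNneq => lj0.
  (* the real and imaginary parts of a complex null vector of A are real null vectors *)
  have PA : row j P *m map_mx rc A = 0.
    have /unitarymxP PPt := Pu.
    rewrite Adiag -row_mul !mulmxA PPt mul1mx mul_diag_mx.
    by apply/rowP => i; rewrite !mxE lj0 mul0r.
  have [/Aker ReP /Aker ImP] := real_kernel_Re_Im PA.
  by move: ReP ImP; rewrite !mxE => -> ->; rewrite expr0n addr0.
Qed.

End SpectralWeights.

Section NotSedentary.
Variable R : realType.

Lemma unitmx_notin_Phi0 n (A : 'M[R]_n) u : A \in unitmx -> ~ Phi A u 0.
Proof.
move=> Au [E [[_ [_ EK]]]]; have -> : E = 0.
  apply/eqP; rewrite -submx0 (eqmxP EK) submx0 /eigenspace raddf0 subr0.
  by rewrite kermx_eq0 row_free_unit.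
by rewrite mul0mx eqxx.
Qed.

Lemma double_adj_copy_not_sedentary n (A : 'M[R]_n) u v : A^T = A -> ~ Phi A u 0 ->
  v = copy0 u \/ v = copy1 u -> not_sedentary (double_adj A) v.
Proof.
move=> AT uPhi uv.
have Aker (x : 'rV_n) : x *m A = 0 -> x 0 u = 0.
  by move=> xA; apply: (notin_Phi_eigenvector uPhi); rewrite xA scale0r.
have [w [l [Aw wl]]] := symmetric_spectral_weights AT Aker.
apply: inf_pos_image_eq0 => [t|e e0]; first exact: sqrtr_ge0.
have [t t0 fte] := cos_sum_small wl e0.
by exists t; rewrite // (absU_double_adj_copy _ Aw uv).
Qed.

End NotSedentary.

Theorem theorem30 (R : realType) (n : nat) (A : 'M[R]_n) (u : 'I_n) :
  weighted_graph A -> graph_connected A -> ~ bipartite A ->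
  (~ Phi A u 0 ->
     not_sedentary (double_adj A) (copy0 u) /\
     not_sedentary (double_adj A) (copy1 u)) /\
  (A \in unitmx -> forall v : 'I_(n + n), not_sedentary (double_adj A) v).
Proof.
move=> [AT _] _ _; split => [uPhi | Au v].
  by split; apply: double_adj_copy_not_sedentary AT uPhi _; [left | right].
have uPhi a := unitmx_notin_Phi0 (u := a) Au.
rewrite -(splitK v); case: (fintype.split v) => a /=.
- by apply: double_adj_copy_not_sedentary AT (uPhi a) _; left.
- by apply: double_adj_copy_not_sedentary AT (uPhi a) _; right.
Qed.
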